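(* Let $p$ be a strictly monotone lattice norm on $\mathbb{R}^2$ with $p((1,0))=p((0,1))=1$, and let $\Phi$ be an Orlicz function. If $x,y\in L^\Phi(\mu)$ satisfy $0\le x\le y$ and $\|y\|_{\Phi,p}=1$, then $$\|y-x\|_{\Phi,p}\le 1-\delta_{m,p}\big(I_\Phi(x)\big),$$ where $\delta_{m,p}$ is the modulus of monotonicity of $(\mathbb{R}^2,p)$.
   Context: $(\Omega,\Sigma,\mu)$ is a $\sigma$-finite complete measure space, $L^0$ the space of (classes of a.e. equal) real measurable functions, ordered pointwise a.e. An Orlicz function is a function $\Phi:\mathbb{R}\to[0,\infty)$ which is convex, even, vanishes at $0$ and is not identically zero. $I_\Phi(x)=\int_\Omega\Phi(x(t))\,d\mu\in[0,+\infty]$; $L^\Phi(\mu)=\{x\in L^0: I_\Phi(\lambda x)<\infty\text{ for some }\lambda>0\}$. A lattice norm on $\mathbb{R}^2$ is a norm $p$ with $p((u,v))\le p((u',v'))$ whenever $|u|\le|u'|,|v|\le|v'|$; it is strictly monotone if $0\le X\le Y$ coordinatewise and $X\ne Y$ imply $p(X)<p(Y)$. $\|x\|_{\Phi,p}=\inf_{k>0}\frac1k p((1,I_\Phi(kx)))$ with the convention $p((1,+\infty))=+\infty$. The modulus of monotonicity of $(\mathbb{R}^2,p)$ is $\delta_{m,p}(\varepsilon)=\inf\{1-p(Y-X): X,Y\in\mathbb{R}^2,\ 0\le X\le Y \text{ coordinatewise},\ p(X)\ge\varepsilon,\ p(Y)=1\}$ for $\varepsilon\in(0,1]$, and $\delta_{m,p}(0)=0$.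 (One has $I_\Phi(x)\in[0,1]$ under the hypotheses.) *)

From HB Require Import structures.
From mathcomp Require Import all_boot all_order all_algebra.
From mathcomp Require Import all_classical all_reals all_analysis.
Set Implicit Arguments. Unset Strict Implicit. Unset Printing Implicit Defensive.
Import Order.TTheory GRing.Theory Num.Theory.
Local Open Scope classical_set_scope.
Local Open Scope ring_scope.

Definition orlicz_function (R : realType) (Phi : R -> R) : Prop :=
  [/\ (forall u, 0 <= Phi u),
      (forall u v (t : R), 0 <= t <= 1 ->
          Phi (t * u + (1 - t) * v) <= t * Phi u + (1 - t) * Phi v),
      (forall u, Phi (- u) = Phi u),
      Phi 0 = 0 &
      exists u, Phi u != 0].

Definition lattice_norm (R : realType) (p : R * R -> R) : Prop :=
  [/\ (forall X, p X = 0 -> X = (0, 0)),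
      (forall (a : R) X, p (a * X.1, a * X.2) = `|a| * p X),
      (forall X Y, p (X.1 + Y.1, X.2 + Y.2) <= p X + p Y) &
      (forall u v u' v', `|u| <= `|u'| -> `|v| <= `|v'| -> p (u, v) <= p (u', v'))].

Definition coord_le (R : realType) (X Y : R * R) : Prop :=
  X.1 <= Y.1 /\ X.2 <= Y.2.

Definition strictly_monotone (R : realType) (p : R * R -> R) : Prop :=
  forall X Y, coord_le (0, 0) X -> coord_le X Y -> X <> Y -> p X < p Y.

Definition I_Phi (R : realType) d (T : measurableType d)
    (mu : {measure set T -> \bar R}) (Phi : R -> R) (x : T -> R) : \bar R :=
  (\int[mu]_t (Phi (x t))%:E)%E.

Definition in_LPhi (R : realType) d (T : measurableType d)
    (mu : {measure set T -> \bar R}) (Phi : R -> R) (x : T -> R) : Prop :=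
  measurable_fun setT x /\
  exists lam : R, 0 < lam /\ (I_Phi mu Phi (fun t => (lam * x t)%R) < +oo)%E.

(* (1/k) p((1, I_Phi(kx))), with the convention p((1,+oo)) = +oo. *)
Definition orlicz_term (R : realType) d (T : measurableType d)
    (mu : {measure set T -> \bar R}) (Phi : R -> R) (p : R * R -> R)
    (x : T -> R) (k : R) : \bar R :=
  match I_Phi mu Phi (fun t => k * x t) with
  | EFin r => (k^-1 * p (1, r))%:E
  | _ => +oo%E
  end.

Definition orlicz_pnorm (R : realType) d (T : measurableType d)
    (mu : {measure set T -> \bar R}) (Phi : R -> R) (p : R * R -> R)
    (x : T -> R) : \bar R :=
  ereal_inf [set orlicz_term mu Phi p x k | k in [set k : R | 0 < k]].

Definition delta_m (R : realType) (p : R * R -> R) (eps : R) : R :=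
  if eps == 0 then 0 else
  inf [set r : R | exists X Y : R * R,
        [/\ coord_le (0, 0) X, coord_le X Y, eps <= p X, p Y = 1 &
            r = 1 - p (Y.1 - X.1, Y.2 - X.2)]].

From HB Require Import structures.
From mathcomp Require Import all_boot all_order all_algebra.
From mathcomp Require Import all_classical all_reals all_analysis.
From mathcomp Require Import measurable_realfun ring lra.
Import Order.TTheory GRing.Theory Num.Theory numFieldNormedType.Exports.
Local Open Scope classical_set_scope.
Local Open Scope ring_scope.

(* Write [n := ||y - x||] and [e := I_Phi x]; the heart of the proof is
   [p (n, e) <= 1].  Take [k > 0] nearly attaining [||y|| = 1].  Superadditivity
   of [Phi] on [0 <= x <= y] splits [I_Phi (k y) >= a + c] with
   [a := I_Phi (k (y - x))] and [c := I_Phi (k x)]; since [n <= p (1, a) / k],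
   the lattice-norm inequality [p (p (w1, w2), t) <= p (w1, w2 + t)] yields
   [p (n, c / k) <= p (1, I_Phi (k y)) / k], which is close to [1].  Moreover [c / k]
   is almost [e]: by convexity when [k >= 1], and by monotone convergence in
   the scaling when [k < 1] is close to [1].  Finally [p (n, e) <= 1] bounds the
   modulus of monotonicity through the pair [(0, e)/q <= (n, e)/q], [q := p (n, e)]. *)

Section LatticeNorm.
Context {R : realType} {p : R * R -> R}.
Hypothesis hp : lattice_norm p.

Lemma lattice_normZ a u v : p (a * u, a * v) = `|a| * p (u, v).
Proof. by case: hp => _ hZ _ _; exact: (hZ a (u, v)). Qed.

Lemma lattice_normD u1 v1 u2 v2 : p (u1 + u2, v1 + v2) <= p (u1, v1) + p (u2, v2).
Proof. by case: hp => _ _ hD _; exact: (hD (u1, v1) (u2, v2)). Qed.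

Lemma lattice_norm_le u v u' v' :
  0 <= u <= u' -> 0 <= v <= v' -> p (u, v) <= p (u', v').
Proof.
move=> /andP[u0 uu'] /andP[v0 vv']; case: hp => _ _ _; apply.
- by rewrite !ger0_norm // (le_trans u0).
- by rewrite !ger0_norm // (le_trans v0).
Qed.

Lemma lattice_norm_ge0 u v : 0 <= p (u, v).
Proof.
have p00 : p (0, 0) = 0 by have := lattice_normZ 0 0 0; rewrite mul0r normr0 mul0r.
have pN : p (- u, - v) = p (u, v).
  by have := lattice_normZ (-1) u v; rewrite !mulN1r normrN normr1 mul1r.
by have := lattice_normD u v (- u) (- v); rewrite !subrr p00 pN; lra.
Qed.

Lemma lattice_norm_conv a b u1 v1 u2 v2 : 0 <= a -> 0 <= b ->
  p (a * u1 + b * u2, a * v1 + b * v2) <= a * p (u1, v1) + b * p (u2, v2).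
Proof.
by move=> a0 b0; apply: le_trans (lattice_normD _ _ _ _) _; rewrite !lattice_normZ !ger0_norm.
Qed.

Hypothesis p10 : p (1, 0) = 1.
Hypothesis p01 : p (0, 1) = 1.

Lemma lattice_norm_u0 u : 0 <= u -> p (u, 0) = u.
Proof. by move=> u0; have := lattice_normZ u 1 0; rewrite mulr1 mulr0 p10 mulr1 ger0_norm. Qed.

Lemma lattice_norm_0v v : 0 <= v -> p (0, v) = v.
Proof. by move=> v0; have := lattice_normZ v 0 1; rewrite mulr1 mulr0 p01 mulr1 ger0_norm. Qed.

(* With [s := w2 + t], the point [(P, t)] lies below the convex combination
   [(w2/s) (Q, 0) + (t/s) (w1, s)] with [Q := p (w1, s)], and [P <= Q]. *)
Lemma lattice_norm_nest_le w1 w2 t : 0 <= w1 -> 0 <= w2 -> 0 <= t ->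
  p (p (w1, w2), t) <= p (w1, w2 + t).
Proof.
move=> w10 w20 t0.
set P := p (w1, w2); set Q := p (w1, w2 + t); set s := w2 + t.
have [s0|s_neq0] := eqVneq s 0.
  have [w2_0 t_0] : w2 = 0 /\ t = 0 by rewrite /s in s0; lra.
  by rewrite /P /Q w2_0 t_0 addr0 !lattice_norm_u0.
have s_gt0 : 0 < s by rewrite lt_def s_neq0 addr_ge0.
have P0 : 0 <= P := lattice_norm_ge0 _ _.
have PQ : P <= Q by apply: lattice_norm_le; lra.
have w2s : 0 <= w2 / s by rewrite divr_ge0 // ltW.
have ts : 0 <= t / s by rewrite divr_ge0 // ltW.
have sP : s * P <= t * w1 + w2 * Q.
  have := lattice_norm_conv _ _ w1 0 w1 s ts w2s.
  rewrite (lattice_norm_u0 _ w10) -/Q -[_ * w1 + _ * w1]mulrDl -mulrDl [t + w2]addrC.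
  rewrite divff ?gt_eqF // mul1r mulr0 add0r divfK ?gt_eqF // -/P => h.
  apply: le_trans (ler_wpM2l (ltW s_gt0) h) _.
  by rewrite le_eqVlt; apply/orP; left; apply/eqP; field.
apply: le_trans (_ : p (w2 / s * Q + t / s * w1, w2 / s * 0 + t / s * s) <= _).
  apply: lattice_norm_le; last by rewrite mulr0 add0r divfK ?gt_eqF // t0 lexx.
  rewrite P0 /= -(ler_pM2l s_gt0); apply: le_trans sP _.
  by rewrite le_eqVlt; apply/orP; left; apply/eqP; field.
apply: le_trans (lattice_norm_conv _ _ _ _ _ _ w2s ts) _.
rewrite (lattice_norm_u0 _ (lattice_norm_ge0 _ _)) -/Q.
by rewrite -!mulrDl divff ?mul1r.
Qed.

Lemma lattice_norm_le_shift u v v' eta : 0 <= u -> 0 <= v -> 0 <= v' -> 0 <= eta ->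
  v - eta <= v' -> p (u, v) <= p (u, v') + eta.
Proof.
move=> u0 v0 v'0 eta0 vv'; have [le_vv'|lt_v'v] := lerP v v'.
  have : p (u, v) <= p (u, v') by apply: lattice_norm_le; rewrite ?u0 ?v0 ?le_vv' ?lexx.
  lra.
have := lattice_normD u v' 0 (v - v'); rewrite addr0 (addrC v') subrK lattice_norm_0v; lra.
Qed.

Lemma lattice_norm_scaled_le k a c r n : 0 < k -> 0 <= a -> 0 <= c -> a + c <= r ->
  0 <= n <= k^-1 * p (1, a) -> p (n, k^-1 * c) <= k^-1 * p (1, r).
Proof.
move=> k0 a0 c0 acr /andP[n0 hn].
have ki0 : 0 < k^-1 by rewrite invr_gt0.
have pk z : k^-1 * p (1, z) = p (k^-1, k^-1 * z).
  by have := lattice_normZ k^-1 1 z; rewrite mulr1 gtr0_norm.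
rewrite pk in hn; rewrite pk.
have kc : 0 <= k^-1 * c by rewrite mulr_ge0 // ltW.
have ka : 0 <= k^-1 * a by rewrite mulr_ge0 // ltW.
apply: le_trans (_ : p (p (k^-1, k^-1 * a), k^-1 * c) <= _).
  by apply: lattice_norm_le; rewrite ?n0 ?hn ?kc ?lexx.
apply: le_trans (lattice_norm_nest_le _ _ _ (ltW ki0) ka kc) _.
apply: lattice_norm_le; first by rewrite (ltW ki0) lexx.
by rewrite addr_ge0 //= -mulrDr ler_wpM2l // ltW.
Qed.

Lemma delta_m_le n e : 0 <= n -> 0 <= e -> p (n, e) <= 1 -> n <= 1 - delta_m p e.
Proof.
move=> n0 e0 pne1; rewrite /delta_m.
have [e_eq0|e_neq0] := eqVneq e 0.
  by move: pne1; rewrite e_eq0 lattice_norm_u0 // subr0.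
set q := p (n, e); set S := [set r : R | _].
have e_gt0 : 0 < e by rewrite lt_def e_neq0.
have e_le_q : e <= q.
  by rewrite /q -{1}(lattice_norm_0v _ e0); apply: lattice_norm_le; rewrite ?lexx ?n0 ?e0.
have q_gt0 : 0 < q := lt_le_trans e_gt0 e_le_q.
have S_lb : has_lbound S.
  exists 0 => r [[X1 X2] [[Y1 Y2] [[/= X10 X20] [/= XY1 XY2] _ <- ->]]].
  by rewrite subr_ge0 /=; apply: lattice_norm_le; lra.
have S_witness : S (1 - n / q).
  have eq0 : 0 <= e / q by rewrite divr_ge0 // ltW.
  have nq0 : 0 <= n / q by rewrite divr_ge0 // ltW.
  exists (0, e / q), (n / q, e / q); split => //=.
  - by rewrite lattice_norm_0v // ler_pdivlMr // ler_piMr.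
  - by rewrite !(mulrC _ q^-1) lattice_normZ gtr0_norm ?invr_gt0 // mulVf ?gt_eqF.
  - by rewrite subr0 subrr lattice_norm_u0.
have := ge_inf S_lb S_witness.
have : n <= n / q by rewrite ler_pdivlMr // ler_piMr.
lra.
Qed.

End LatticeNorm.

Section OrliczFunction.
Context {R : realType} {Phi : R -> R}.
Hypothesis hPhi : orlicz_function Phi.

Lemma orlicz_ge0 u : 0 <= Phi u. Proof. by case: hPhi. Qed.

Lemma orlicz_convex u v t : 0 <= t <= 1 ->
  Phi (t * u + (1 - t) * v) <= t * Phi u + (1 - t) * Phi v.
Proof. by case: hPhi => _ hconv _ _ _; exact: hconv. Qed.

Lemma orlicz_scale_le t u : 0 <= t <= 1 -> Phi (t * u) <= t * Phi u.
Proof.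
case: hPhi => _ _ _ Phi0 _ ht.
by have := orlicz_convex u 0 _ ht; rewrite mulr0 addr0 Phi0 mulr0 addr0.
Qed.

Lemma orlicz_scale_ge k u : 1 <= k -> k * Phi u <= Phi (k * u).
Proof.
move=> k1; have k_gt0 : 0 < k by lra.
have : 0 <= k^-1 <= 1 by rewrite invr_ge0 (ltW k_gt0) invf_le1.
move=> /(orlicz_scale_le _ (k * u)); rewrite mulKf ?gt_eqF //.
have ki_gt0 : 0 < k^-1 by rewrite invr_gt0.
by rewrite -(ler_pM2l ki_gt0) mulKf ?gt_eqF.
Qed.

Lemma orlicz_le_ge0 a b : 0 <= a <= b -> Phi a <= Phi b.
Proof.
move=> /andP[a0 ab]; have [b0|b_neq0] := eqVneq b 0.
  by have -> : a = b by lra.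
have b_gt0 : 0 < b by rewrite lt_def b_neq0 (le_trans a0 ab).
have ab1 : 0 <= a / b <= 1 by rewrite divr_ge0 ?(ltW b_gt0) //= ler_pdivrMr // mul1r.
apply: le_trans (_ : a / b * Phi b <= _); first by have := orlicz_scale_le _ b ab1; rewrite divfK ?gt_eqF.
by rewrite ler_piMl ?orlicz_ge0 //; case/andP: ab1.
Qed.

Lemma orlicz_norm u : Phi `|u| = Phi u.
Proof. by case: (ler0P u) => // _; case: hPhi. Qed.

Lemma orlicz_le u v : `|u| <= `|v| -> Phi u <= Phi v.
Proof. by move=> uv; rewrite -orlicz_norm -(orlicz_norm v) orlicz_le_ge0 // uv normr_ge0. Qed.

(* Add [Phi a <= (a / b) Phi b] and [Phi (b - a) <= ((b - a) / b) Phi b]. *)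
Lemma orlicz_superadditive a b : 0 <= a <= b -> Phi a + Phi (b - a) <= Phi b.
Proof.
move=> /andP[a0 ab]; have [b0|b_neq0] := eqVneq b 0.
  have -> : a = 0 by lra.
  by case: hPhi => _ _ _ Phi0 _; rewrite b0 subrr Phi0 addr0.
have b_gt0 : 0 < b by rewrite lt_def b_neq0 (le_trans a0 ab).
have h1 : 0 <= a / b <= 1 by rewrite divr_ge0 ?(ltW b_gt0) //= ler_pdivrMr // mul1r.
have h2 : 0 <= (b - a) / b <= 1.
  by rewrite divr_ge0 ?(ltW b_gt0) ?subr_ge0 //= ler_pdivrMr // mul1r; lra.
have := orlicz_scale_le _ b h1; have := orlicz_scale_le _ b h2; rewrite !divfK ?gt_eqF //.
move=> H2 H1; apply: le_trans (lerD H1 H2) _.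
by rewrite -mulrDl -mulrDl addrC subrK divff ?gt_eqF // mul1r.
Qed.

(* Convexity on the points [k u <= u <= 2 u]. *)
Lemma orlicz_scale_lower k u : 0 <= k <= 1 ->
  Phi u - (1 - k) * (Phi (2 * u) - Phi u) <= Phi (k * u).
Proof.
move=> /andP[k0 k1]; have k2 : 0 < 2 - k by lra.
have : 0 <= (2 - k)^-1 <= 1 by rewrite invr_ge0 ltW //= invf_le1; lra.
move=> /(orlicz_convex (k * u) (2 * u) _).
have -> : (2 - k)^-1 * (k * u) + (1 - (2 - k)^-1) * (2 * u) = u by field; lra.
move=> /(ler_wpM2l (ltW k2)).
have -> : (2 - k) * ((2 - k)^-1 * Phi (k * u) + (1 - (2 - k)^-1) * Phi (2 * u))
          = Phi (k * u) + (1 - k) * Phi (2 * u) by field; lra.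
lra.
Qed.

Lemma orlicz_cvg_scale (kk : R ^nat) (u : R) : (forall n, 0 <= kk n <= 1) ->
  kk @ \oo --> (1 : R) -> (fun n => Phi (kk n * u)) @ \oo --> Phi u.
Proof.
move=> kk01 kk1; set C := Phi (2 * u) - Phi u.
have C0 : 0 <= C.
  by rewrite subr_ge0 orlicz_le // normrM ger0_norm // ler_peMl // ler1n.
apply: (@squeeze_cvgr _ _ _ _ (fun n => Phi u - (1 - kk n) * C) (fun=> Phi u)).
- apply: nearW => n; rewrite /C orlicz_scale_lower //=.
  by rewrite orlicz_le // normrM ler_piMl // ger0_norm; case/andP: (kk01 n).
- have h : (fun n => Phi u - (1 - kk n) * C) @ \oo --> Phi u - (1 - 1) * C.
    by apply: cvgB; [exact: cvg_cst | apply: cvgM; [apply: cvgB => //; exact: cvg_cst | exact: cvg_cst]].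
  by rewrite subrr mul0r subr0 in h.
- exact: cvg_cst.
Qed.

Lemma measurable_orlicz : measurable_fun setT Phi.
Proof.
pose g u := Phi (Num.max u 0).
have -> : Phi = g \o Num.norm.
  by apply/funext => u /=; rewrite /g max_l // orlicz_norm.
apply: measurableT_comp; last exact: normr_measurable.
apply: nondecreasing_measurable => // a b ab; apply: orlicz_le_ge0.
by rewrite le_max lexx orbT le_max2.
Qed.

End OrliczFunction.

Section OrliczModular.
Local Open Scope ereal_scope.
Context {R : realType} {d : measure_display} {T : measurableType d}.
Variable mu : {measure set T -> \bar R}.
Context {Phi : R -> R}.
Hypothesis hPhi : orlicz_function Phi.

Lemma measurable_orliczM (f : T -> R) (k : R) : measurable_fun setT f ->
  measurable_fun setT (fun t => (Phi (k * f t))%:E).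
Proof.
move=> mf; apply/measurable_EFinP; apply: measurableT_comp.
  exact: measurable_orlicz.
by apply: measurable_funM => //; exact: measurable_cst.
Qed.

Lemma I_Phi_ge0 f : 0 <= I_Phi mu Phi f.
Proof. by apply: integral_ge0 => t _; rewrite lee_fin orlicz_ge0. Qed.

Lemma le_I_Phi (x : T -> R) (k0 k : R) : measurable_fun setT x -> (`|k0| <= `|k|)%R ->
  I_Phi mu Phi (fun t => k0 * x t)%R <= I_Phi mu Phi (fun t => k * x t)%R.
Proof.
move=> mx kk; apply: ge0_le_integral => //.
- by move=> t _; rewrite lee_fin orlicz_ge0.
- exact: measurable_orliczM.
- exact: measurable_orliczM.
by move=> t _; rewrite lee_fin orlicz_le // !normrM ler_wpM2r.
Qed.

Lemma I_Phi_scale_ge (x : T -> R) (k : R) : measurable_fun setT x -> (1 <= k)%R ->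
  k%:E * I_Phi mu Phi x <= I_Phi mu Phi (fun t => k * x t)%R.
Proof.
move=> mx k1; have k0 : (0 <= k)%R by apply: le_trans k1.
have mPhix : measurable_fun setT (fun t => (Phi (x t))%:E).
  by have := measurable_orliczM x 1%R mx; under eq_fun do rewrite mul1r.
rewrite /I_Phi -ge0_integralZl_EFin //; last by move=> t _; rewrite lee_fin orlicz_ge0.
apply: ge0_le_integral => //.
- by move=> t _; rewrite mule_ge0 // lee_fin ?orlicz_ge0.
- exact: measurable_funeM.
- exact: measurable_orliczM.
by move=> t _; rewrite -EFinM lee_fin orlicz_scale_ge.
Qed.

Lemma I_Phi_superadditive (x y : T -> R) (k : R) :
  measurable_fun setT x -> measurable_fun setT y -> (0 <= k)%R ->
  {ae mu, forall t, (0 <= x t <= y t)%R} ->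
  I_Phi mu Phi (fun t => k * (y t - x t))%R + I_Phi mu Phi (fun t => k * x t)%R
    <= I_Phi mu Phi (fun t => k * y t)%R.
Proof.
move=> mx my k0 hxy; rewrite /I_Phi.
have myx : measurable_fun setT (fun t => y t - x t)%R by exact: measurable_funB.
rewrite -ge0_integralD //; try exact: measurable_orliczM;
  try by move=> t _; rewrite lee_fin orlicz_ge0.
apply: ae_ge0_le_integral => //; try exact: measurable_orliczM;
  try by move=> t _; rewrite ?adde_ge0 // lee_fin orlicz_ge0.
  by apply: emeasurable_funD; exact: measurable_orliczM.
apply: filterS hxy => t /andP[x0 xy] _; rewrite -EFinD lee_fin addrC mulrBr.
by apply: (orlicz_superadditive hPhi); rewrite ler_wpM2l ?mulr_ge0.
Qed.

(* Monotone convergence along the scalings [1 - 1/(n+1)], which tend to [1] from below. *)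
Lemma I_Phi_scale_left (x : T -> R) (l : R) : measurable_fun setT x ->
  l%:E < I_Phi mu Phi x ->
  exists2 k0 : R, (0 < k0 < 1)%R & l%:E <= I_Phi mu Phi (fun t => k0 * x t)%R.
Proof.
move=> mx lI.
pose kk n : R := (1 - harmonic n)%R.
have kk01 n : (0 <= kk n <= 1)%R.
  rewrite /kk subr_ge0 gerBl harmonic_ge0 andbT /=.
  by rewrite invf_le1 // ler1n.
have kk_gt0 n : (0 < kk n.+1)%R.
  by rewrite /kk subr_gt0 /= invf_lt1 // ltr1n.
have kk_nd : {homo kk : m n / (m <= n)%N >-> (m <= n)%R}.
  move=> m n mn; rewrite /kk lerD2l lerN2 /= lef_pV2 ?posrE //.
  by rewrite ler_nat.
have kk1 : kk @ \oo --> (1 : R)%R.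
  by rewrite -[X in _ --> X]subr0; apply: cvgB; [exact: cvg_cst | exact: cvg_harmonic].
pose g n t := (Phi (kk n * x t))%:E.
have g_nd t : setT t -> {homo g^~ t : m n / (m <= n)%N >-> m <= n}.
  move=> _ m n mn; rewrite lee_fin orlicz_le // !normrM ler_wpM2r //.
  by rewrite !ger0_norm ?kk_nd //; [case/andP: (kk01 n) | case/andP: (kk01 m)].
have g_lim t : limn (g^~ t) = (Phi (x t))%:E.
  apply: cvg_lim => //; apply/cvg_EFin; first exact: nearW.
  exact: orlicz_cvg_scale.
have I_lim : I_Phi mu Phi x = limn (fun n => \int[mu]_t g n t).
  rewrite [LHS](_ : _ = \int[mu]_t limn (g^~ t)); last first.
    by apply: eq_integral => t _; rewrite g_lim.
  apply: monotone_convergence => //.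
  - by move=> n; exact: measurable_orliczM.
  - by move=> n t _; rewrite lee_fin orlicz_ge0.
have I_nd : nondecreasing_seq (fun n => \int[mu]_t g n t).
  move=> m n mn; apply: ge0_le_integral => //.
  - by move=> t _; rewrite lee_fin orlicz_ge0.
  - exact: measurable_orliczM.
  - exact: measurable_orliczM.
  - by move=> t _; exact: g_nd.
rewrite I_lim in lI.
have [N _ HN] := lte_lim I_nd (ereal_nondecreasing_is_cvgn I_nd) lI.
exists (kk N.+1); first by rewrite kk_gt0 /kk gtrBl harmonic_gt0.
exact: (HN N.+1 (leqnSn N)).
Qed.

Lemma I_Phi_le_scale_inv (x : T -> R) (k0 k : R) : measurable_fun setT x ->
  (0 < k0 <= 1)%R -> (k0 <= k)%R ->
  I_Phi mu Phi (fun t => k0 * x t)%R <= k^-1%:E * I_Phi mu Phi (fun t => k * x t)%R.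
Proof.
move=> mx /andP[k00 k01] k0k; have k_gt0 : (0 < k)%R := lt_le_trans k00 k0k.
have [k1|k1] := lerP 1 k.
- have Ik0x : I_Phi mu Phi (fun t => k0 * x t)%R <= I_Phi mu Phi x.
    rewrite [I_Phi mu Phi x](_ : _ = I_Phi mu Phi (fun t => 1 * x t)%R).
      by apply: le_I_Phi => //; rewrite normr1 ger0_norm // ltW.
    by congr I_Phi; apply/funext => t; rewrite mul1r.
  apply: le_trans Ik0x _.
  have -> : I_Phi mu Phi x = k^-1%:E * (k%:E * I_Phi mu Phi x).
    by rewrite muleA -EFinM mulVf ?gt_eqF // mul1e.
  by apply: lee_wpmul2l; [rewrite lee_fin invr_ge0 ltW | exact: I_Phi_scale_ge].
- have Ik0x : I_Phi mu Phi (fun t => k0 * x t)%R <= I_Phi mu Phi (fun t => k * x t)%R.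
    by apply: le_I_Phi => //; rewrite !ger0_norm // ltW.
  apply: le_trans Ik0x _.
  rewrite -[leLHS]mul1e; apply: lee_wpmul2r; first exact: I_Phi_ge0.
  by rewrite lee_fin invf_ge1 ?ltW.
Qed.

Lemma I_Phi_split (x y : T -> R) (k r : R) :
  measurable_fun setT x -> measurable_fun setT y -> (0 <= k)%R ->
  {ae mu, forall t, (0 <= x t <= y t)%R} ->
  I_Phi mu Phi (fun t => k * y t)%R = r%:E ->
  exists a c : R, [/\ I_Phi mu Phi (fun t => k * (y t - x t))%R = a%:E,
    I_Phi mu Phi (fun t => k * x t)%R = c%:E, (0 <= a)%R, (0 <= c)%R & (a + c <= r)%R].
Proof.
move=> mx my k0 hxy Ir; have := I_Phi_superadditive _ _ _ mx my k0 hxy; rewrite Ir.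
have := I_Phi_ge0 (fun t => k * (y t - x t))%R; have := I_Phi_ge0 (fun t => k * x t)%R.
case: (I_Phi mu Phi (fun t => k * (y t - x t))%R) => [a| |] //;
case: (I_Phi mu Phi (fun t => k * x t)%R) => [c| |] //.
move=> c0 a0 acr; exists a, c; split; rewrite // -lee_fin // EFinD.
Qed.

End OrliczModular.

Section OrliczNorm.
Context {R : realType} {d : measure_display} {T : measurableType d}.
Variable mu : {measure set T -> \bar R}.
Context {Phi : R -> R} {p : R * R -> R}.
Hypothesis hp : lattice_norm p.

Lemma orlicz_pnorm_ge0 (x : T -> R) : (0 <= orlicz_pnorm mu Phi p x)%E.
Proof.
apply: le_ereal_inf_tmp => _ [k k0 <-]; rewrite /orlicz_term.
case: (I_Phi mu Phi _) => [r| |] //=.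
by rewrite lee_fin mulr_ge0 ?(lattice_norm_ge0 hp) // invr_ge0 ltW.
Qed.

Lemma orlicz_pnorm_le (x : T -> R) (k a : R) : 0 < k ->
  I_Phi mu Phi (fun t => k * x t) = a%:E ->
  (orlicz_pnorm mu Phi p x <= (k^-1 * p (1, a))%:E)%E.
Proof. by move=> k0 Ia; apply: ereal_inf_lbound; exists k => //; rewrite /orlicz_term Ia. Qed.

Lemma orlicz_pnorm_lt (x : T -> R) (s : R) : (orlicz_pnorm mu Phi p x < s%:E)%E ->
  exists k r : R, [/\ 0 < k, I_Phi mu Phi (fun t => k * x t) = r%:E & k^-1 * p (1, r) < s].
Proof.
case/ereal_inf_lt => _ [k k0 <-]; rewrite /orlicz_term.
by case Ir: (I_Phi mu Phi _) => [r| |] //; rewrite lte_fin => lt_s; exists k, r.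
Qed.

Section Difference.
Hypothesis p10 : p (1, 0) = 1.
Hypothesis p01 : p (0, 1) = 1.
Hypothesis hPhi : orlicz_function Phi.
Context {x y : T -> R}.
Hypothesis mx : measurable_fun setT x.
Hypothesis my : measurable_fun setT y.
Hypothesis hxy : {ae mu, forall t, 0 <= x t <= y t}.
Hypothesis hy : orlicz_pnorm mu Phi p y = 1%E.

Let N := orlicz_pnorm mu Phi p (fun t => y t - x t).

Lemma orlicz_pnorm_sub_fin_num : N \is a fin_num.
Proof.
have /orlicz_pnorm_lt[k [r [k0 Ir _]]] : (orlicz_pnorm mu Phi p y < 2%:E)%E.
  by rewrite hy lte_fin ltr1n.
have [a [c [Ia _ _ _ _]]] := I_Phi_split mu hPhi _ _ _ _ mx my (ltW k0) hxy Ir.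
rewrite ge0_fin_numE ?orlicz_pnorm_ge0 //.
exact: le_lt_trans (orlicz_pnorm_le _ _ _ k0 Ia) (ltey _).
Qed.

Lemma orlicz_pnorm_sub_scaled eps : 0 < eps -> exists k c : R,
  [/\ 0 < k, k^-1 < 1 + eps, I_Phi mu Phi (fun t => k * x t) = c%:E, 0 <= c &
      p (fine N, k^-1 * c) < 1 + eps].
Proof.
move=> eps0.
have /orlicz_pnorm_lt[k [r [k0 Ir lt_eps]]] : (orlicz_pnorm mu Phi p y < (1 + eps)%:E)%E.
  by rewrite hy lte_fin ltrDl.
have [a [c [Ia Ic a0 c0 acr]]] := I_Phi_split mu hPhi _ _ _ _ mx my (ltW k0) hxy Ir.
exists k, c; split => //.
  have p1r : 1 <= p (1, r).
    rewrite -[leLHS]p10; apply: (lattice_norm_le hp); first by rewrite ler01 lexx.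
    by rewrite lexx (le_trans (addr_ge0 a0 c0) acr).
  by apply: le_lt_trans lt_eps; rewrite ler_peMr // invr_ge0 ltW.
have N_le : 0 <= fine N <= k^-1 * p (1, a).
  rewrite fine_ge0 ?orlicz_pnorm_ge0 //= -lee_fin fineK ?orlicz_pnorm_sub_fin_num //.
  exact: orlicz_pnorm_le _ _ _ k0 Ia.
exact: le_lt_trans (lattice_norm_scaled_le hp p10 _ _ _ _ _ k0 a0 c0 acr N_le) lt_eps.
Qed.

Lemma lattice_norm_orlicz_pnorm_sub_le : p (fine N, fine (I_Phi mu Phi x)) <= 1.
Proof.
apply/ler_addgt0Pr => eta eta0; set n := fine N.
have n0 : 0 <= n by rewrite fine_ge0 ?orlicz_pnorm_ge0.
case Ix: (I_Phi mu Phi x) (I_Phi_ge0 mu hPhi x) => [e| |] //= e0; last first.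
  have [k [c [k0 _ _ c0 lt_eta]]] := orlicz_pnorm_sub_scaled _ eta0.
  apply: le_trans (ltW lt_eta); apply: (lattice_norm_le hp); first by rewrite n0 lexx.
  by rewrite lexx mulr_ge0 // invr_ge0 ltW.
rewrite lee_fin in e0; have eta2 : 0 < eta / 2 by rewrite divr_gt0.
have [k0 /andP[k0_gt0 k0_lt1] Ik0] : exists2 k0 : R, 0 < k0 < 1 &
    ((e - eta / 2)%:E <= I_Phi mu Phi (fun t => (k0 * x t)%R))%E.
  by apply: I_Phi_scale_left => //; rewrite Ix lte_fin gtrBl.
(* [eps <= k0^-1 - 1] forces [k0 <= k], hence [I_Phi (k0 x) <= I_Phi (k x) / k]. *)
set eps := Num.min (eta / 2) (k0^-1 - 1).
have eps0 : 0 < eps by rewrite lt_min eta2 subr_gt0 invf_gt1.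
have [k [c [k_gt0 kinv Ic c0 lt_eps]]] := orlicz_pnorm_sub_scaled _ eps0.
have k0k : k0 <= k.
  rewrite -lef_pV2 ?posrE //; apply: ltW (lt_le_trans kinv _).
  by rewrite -lerBrDl ge_min lexx orbT.
have ec : e - eta / 2 <= k^-1 * c.
  rewrite -lee_fin EFinM -Ic; apply: le_trans Ik0 _.
  by apply: (I_Phi_le_scale_inv mu hPhi) => //; rewrite k0_gt0 ltW.
have kc0 : 0 <= k^-1 * c by rewrite mulr_ge0 // invr_ge0 ltW.
have := lattice_norm_le_shift hp p01 _ _ _ _ n0 e0 kc0 (ltW eta2) ec.
have : eps <= eta / 2 by rewrite ge_min lexx.
lra.
Qed.

End Difference.
End OrliczNorm.

Theorem theorem7 (R : realType) (d : measure_display) (T : measurableType d)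
    (mu : {measure set T -> \bar R})
    (mu_sfin : sigma_finite setT mu) (mu_compl : measure_is_complete mu)
    (p : R * R -> R) (Phi : R -> R) (x y : T -> R) :
  lattice_norm p -> strictly_monotone p -> p (1, 0) = 1 -> p (0, 1) = 1 ->
  orlicz_function Phi ->
  in_LPhi mu Phi x -> in_LPhi mu Phi y ->
  {ae mu, forall t, 0 <= x t <= y t} ->
  orlicz_pnorm mu Phi p y = 1%E ->
  (orlicz_pnorm mu Phi p (fun t => (y t - x t)%R)
     <= (1 - delta_m p (fine (I_Phi mu Phi x)))%:E)%E.
Proof.
move=> hp _ p10 p01 hPhi [mx _] [my _] hxy hy.
rewrite -(fineK (orlicz_pnorm_sub_fin_num mu hp hPhi mx my hxy hy)) lee_fin.
apply: (delta_m_le hp p10 p01).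
- by rewrite fine_ge0 ?orlicz_pnorm_ge0.
- by rewrite fine_ge0 ?I_Phi_ge0.
- exact: (lattice_norm_orlicz_pnorm_sub_le mu hp p10 p01 hPhi mx my hxy hy).
Qed.
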